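(* Let $M$ be a finite abelian group of order $m$, $J$ a Jacobi function on $M$, and $i\colon\hat{M}\to\hat{M}$ a bijection with $i(x)=x\,i(x^{-1})$ for all $x$, such that $J(\alpha,\beta)=\frac{1}{m}\sum_{x\in\hat{M}}\alpha(i(x))\beta(i(x)x^{-1})$ for all $\alpha,\beta\in M$. Define $x\oplus y=x\,i(x/y)^{-1}$ for $x,y\in\hat{M}$. Then for all $\alpha,\beta,\gamma\in M$, \[ \sum_{\substack{(x\oplus y)\oplus z=1,\\ x,y,z\in\hat{M}}}\alpha(x)\beta(y)\gamma(z)=\sum_{\substack{x\oplus(y\oplus z)=1,\\ x,y,z\in\hat{M}}}\alpha(x)\beta(y)\gamma(z). \]
   Context: $\hat{M}$ is the Pontryagin dual of $M$, written multiplicatively with identity $1$; for $\alpha\in M$, $x\in\hat{M}$, $\alpha(x)$ is the value of the character $x$ at $\alpha$. $\delta(\alpha)=1$ if $\alpha$ is the identity of $M$ and $0$ otherwise. A Jacobi function on $M$ is a function $J\colon M\times M\to\mathbf{C}$ satisfying: (A) $J(\alpha,\beta)=J(\beta,\alpha)$; (B) with $J^*(\alpha,\beta)=-\delta(\alpha)-\delta(\beta)+J(\alpha,\beta)$, $J^*(\alpha,\beta)J^*(\alpha\beta,\gamma)=J^*(\alpha,\beta\gamma)J^*(\beta,\gamma)$; (C) $\sum_{\beta\in M}J(\alpha_1\beta,\alpha_2\beta^{-1})J(\alpha_3\beta,\alpha_4\beta^{-1})=J(\alpha_1\alpha_4,\alpha_2\alpha_3)$; all for all elements of $M$. *)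

From HB Require Import structures.
From mathcomp Require Import all_boot all_order all_algebra all_fingroup all_field.
Set Implicit Arguments. Unset Strict Implicit. Unset Printing Implicit Defensive.
Import GRing.Theory Num.Theory.
Local Open Scope ring_scope.

Definition delta (gT : finGroupType) (a : gT) : algC := (a == 1%g)%:R.

Definition Jstar (gT : finGroupType) (J : gT -> gT -> algC) (a b : gT) : algC :=
  - delta a - delta b + J a b.

(* Jacobi function on M (axioms (A), (B), (C)) *)
Definition jacobi_function (gT : finGroupType) (J : gT -> gT -> algC) : Prop :=
  [/\ forall a b : gT, J a b = J b a,
      forall a b c : gT,
        Jstar J a b * Jstar J (a * b)%g c = Jstar J a (b * c)%g * Jstar J b c &
      forall a1 a2 a3 a4 : gT,
        \sum_(b : gT) J (a1 * b)%g (a2 * b^-1)%g * J (a3 * b)%g (a4 * b^-1)%g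
        = J (a1 * a4)%g (a2 * a3)%g].

(* dT is (identified with) the Pontryagin dual of gT via the pairing
   e a x = "a(x)" = value of the character x at a:
   each e(., x) is a homomorphism gT -> C^*, e is multiplicative in x,
   and x |-> e(., x) is a bijection onto Hom(gT, C^* ). *)
Definition dual_pairing (gT dT : finGroupType) (e : gT -> dT -> algC) : Prop :=
  [/\ forall a x, e a x != 0,
      forall a b x, e (a * b)%g x = e a x * e b x,
      forall a x y, e a (x * y)%g = e a x * e a y,
      forall x y, (forall a, e a x = e a y) -> x = y &
      forall chi : gT -> algC, (forall a, chi a != 0) ->
        (forall a b, chi (a * b)%g = chi a * chi b) ->
        exists x, forall a, chi a = e a x].

Definition oplus (dT : finGroupType) (i : dT -> dT) (x y : dT) : dT :=
  (x * (i (x * y^-1))^-1)%g.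

From HB Require Import structures.
From mathcomp Require Import all_boot all_order all_algebra all_fingroup all_field all_character.
From mathcomp Require Import ring.
Set Implicit Arguments. Unset Strict Implicit. Unset Printing Implicit Defensive.
Import GRing.Theory Num.Theory.
Local Open Scope ring_scope.

(* Solving u (+) z = 1 for z collapses the left-hand sum to a double sum over
   (x, y), and the substitution s = x / y, u = x (+) y (so that x = u i(s))
   factors it as m^2 J(a, b) J(ab, c).  As (+) is commutative, the right-hand
   sum is the same expression for the rotated triple (b, c, a).  Expanding
   axiom (B) with J(a, a^-1) = delta(a), which follows from the orthogonality
   of characters, shows that J(a, b) J(ab, c) is invariant under rotation. *)

Lemma sum_hom_eq0 (T : finGroupType) (R : idomainType) (f : T -> R) (g : T) :
  {morph f : x y / (x * y)%g >-> x * y} -> f g != 1 -> \sum_x f x = 0.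
Proof.
move=> fM fg1.
have shift : \sum_x f x = f g * \sum_x f x.
  by rewrite mulr_sumr (reindex_inj (mulgI g)); apply: eq_bigr => x _; rewrite fM.
have /eqP : (1 - f g) * \sum_x f x = 0 by rewrite mulrBl mul1r -shift subrr.
by rewrite mulf_eq0 subr_eq0 eq_sym (negbTE fg1) => /eqP.
Qed.

Section DualPairing.

Variables (gT dT : finGroupType) (e : gT -> dT -> algC).
Hypothesis pairing_e : dual_pairing e.

Lemma pairing_neq0 a x : e a x != 0.
Proof. by case: pairing_e. Qed.

Lemma pairingMl a b x : e (a * b)%g x = e a x * e b x.
Proof. by case: pairing_e. Qed.

Lemma pairingMr a x y : e a (x * y)%g = e a x * e a y.
Proof. by case: pairing_e. Qed.

Lemma pairing_inj x y : (forall a, e a x = e a y) -> x = y.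
Proof. by case: pairing_e => _ _ _ inj _; exact: inj. Qed.

Lemma pairing1r a : e a 1%g = 1.
Proof.
by apply: (mulfI (pairing_neq0 a 1%g)); rewrite -pairingMr !mulg1 mulr1.
Qed.

Lemma pairingVr a x : e a x^-1%g = (e a x)^-1.
Proof.
apply: (mulfI (pairing_neq0 a x)).
by rewrite -pairingMr mulgV pairing1r divff ?pairing_neq0.
Qed.

Lemma pairing1l x : e 1%g x = 1.
Proof.
by apply: (mulfI (pairing_neq0 1%g x)); rewrite -pairingMl !mulg1 mulr1.
Qed.

Lemma pairingVl a x : e a^-1%g x = (e a x)^-1.
Proof.
apply: (mulfI (pairing_neq0 a x)).
by rewrite -pairingMl mulgV pairing1l divff ?pairing_neq0.
Qed.

Lemma dual_commute (x y : dT) : commute x y.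
Proof. by apply: pairing_inj => a; rewrite !pairingMr mulrC. Qed.

Lemma sum_pairingl x : \sum_a e a x = #|gT|%:R * delta x.
Proof.
rewrite /delta; have [->|x1] := eqVneq x 1%g.
  by rewrite (eq_bigr (fun=> 1)) => [|a _]; rewrite ?pairing1r // sumr_const mulr1.
have [a eax] : exists a, e a x != 1.
  apply/existsP; apply: contraR x1 => /existsPn ex1.
  by apply/eqP/pairing_inj => a; rewrite pairing1r; apply/eqP; rewrite -[_ == _]negbK.
by rewrite mulr0 (@sum_hom_eq0 _ _ (e^~ x) a) // => b c; exact: pairingMl.
Qed.

Hypothesis abelian_gT : abelian [set: gT].

(* Irreducible characters of an abelian group are linear and separate points. *)
Lemma dual_separates a : a != 1%g -> exists x, e a x != 1.
Proof.
move=> a1; have [j a_ker] : exists j, a \notin cfker 'chi[[set: gT]%G]_j.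
  apply/existsP; apply: contraR a1 => /existsPn a_ker.
  rewrite -in_set1 -set1gE -(TI_cfker_irr [set: gT]%G); apply/bigcapP => j _.
  by rewrite -[_ \in _]negbK.
have lin_j := char_abelianP _ abelian_gT j.
rewrite cfkerEchar ?irr_char // inE in_setT lin_char1 //= in a_ker.
case: pairing_e => _ _ _ _ /(_ ('chi_j : gT -> algC)) [b|b c|x chi_x].
- exact: lin_char_neq0.
- by rewrite lin_charM ?in_setT.
by exists x; rewrite -chi_x.
Qed.

Lemma sum_pairingr a : \sum_x e a x = #|dT|%:R * delta a.
Proof.
rewrite /delta; have [->|a1] := eqVneq a 1%g.
  by rewrite (eq_bigr (fun=> 1)) => [|x _]; rewrite ?pairing1l // sumr_const mulr1.
have [x eax] := dual_separates a1.
by rewrite mulr0 (@sum_hom_eq0 _ _ (e a) x) // => y z; exact: pairingMr.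
Qed.

Lemma card_dual : #|dT| = #|gT|.
Proof.
have sum_delta (T : finGroupType) (n : algC) : \sum_(t : T) n * delta t = n.
  rewrite -mulr_sumr (bigD1 1%g) //= big1 ?addr0 ?/delta ?eqxx ?mulr1 //.
  by move=> t /negbTE ->.
apply/eqP; rewrite -(eqr_nat algC); apply/eqP.
transitivity (\sum_a \sum_x e a x).
  by rewrite (eq_bigr _ (fun a _ => sum_pairingr a)) sum_delta.
by rewrite exchange_big (eq_bigr _ (fun x _ => sum_pairingl x)) sum_delta.
Qed.

End DualPairing.

Section Oplus.

Variables (dT : finGroupType) (i k : dT -> dT).
Hypotheses (iK : cancel i k) (kK : cancel k i).

Definition oplus_root (u : dT) : dT := ((k u)^-1 * u)%g.

Lemma oplus_eq1 u z : (oplus i u z == 1)%g = (z == oplus_root u).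
Proof.
rewrite /oplus /oplus_root -eq_mulgV1 eq_sym (can2_eq iK kK).
apply/eqP/eqP => [<- | ->]; first by rewrite invMg invgK mulgKV.
by rewrite invMg invgK mulKVg.
Qed.

Lemma sum_oplus_eq1 (R : nmodType) (F : dT -> R) u :
  \sum_(z | oplus i u z == 1%g) F z = F (oplus_root u).
Proof. by rewrite (big_pred1 (oplus_root u)) // => z; rewrite /= oplus_eq1. Qed.

Lemma oplus_shift u s : oplus i (u * i s) (s^-1 * (u * i s)) = u.
Proof. by rewrite /oplus invMg invgK mulKVg mulgK. Qed.

Hypothesis dT_comm : forall x y : dT, commute x y.
Hypothesis i_inv : forall x, i x = (x * i x^-1)%g.

Lemma oplusC : commutative (oplus i).
Proof.
move=> x y; rewrite /oplus [i (x * y^-1)%g]i_inv !invMg !invgK.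
by rewrite dT_comm -mulgA mulgKV dT_comm.
Qed.

End Oplus.

Section JacobiCocycle.

Variables (gT : finGroupType) (J : gT -> gT -> algC).
Hypothesis J_sym : forall a b, J a b = J b a.
Hypothesis Jstar_cocycle : forall a b c,
  Jstar J a b * Jstar J (a * b)%g c = Jstar J a (b * c)%g * Jstar J b c.
Hypothesis J_inv : forall a, J a a^-1%g = delta a.

Definition jacobi_defect a b c :=
  delta a * J b c + delta b * J c a + delta c * J a b
  - (delta a * delta b + delta b * delta c + delta c * delta a).

Lemma jacobi_defect_rotate a b c : jacobi_defect a b c = jacobi_defect b c a.
Proof. by rewrite /jacobi_defect; ring. Qed.

Lemma Jstar_sym a b : Jstar J a b = Jstar J b a.
Proof. by rewrite /Jstar J_sym; ring. Qed.

Lemma JstarM_expand a b c :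
  Jstar J a b * Jstar J (a * b)%g c = J a b * J (a * b)%g c - jacobi_defect a b c.
Proof.
have dabJ : delta (a * b) * J a b = delta (a * b) * delta a.
  rewrite /delta; have [ab1|] := eqVneq (a * b)%g 1%g; last by rewrite !mul0r.
  have -> : b = a^-1%g by apply/eqP; rewrite eq_sym eq_invg_mul ab1.
  by rewrite J_inv.
have daJ : delta a * J (a * b)%g c = delta a * J b c.
  by rewrite /delta; have [->|] := eqVneq a 1%g; rewrite ?mul1g ?mul0r.
have dbJ : delta b * J (a * b)%g c = delta b * J c a.
  by rewrite /delta J_sym; have [->|] := eqVneq b 1%g; rewrite ?mulg1 ?mul0r.
have dbdab : delta b * delta (a * b) = delta b * delta a.
  by rewrite /delta; have [->|] := eqVneq b 1%g; rewrite ?mulg1 ?mul0r.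
transitivity (J a b * J (a * b)%g c
  - (delta a * J (a * b)%g c + delta b * J (a * b)%g c
     + delta (a * b) * J a b + delta c * J a b)
  + (delta (a * b) * delta a + delta b * delta (a * b)
     + (delta a + delta b) * delta c)).
  by rewrite /Jstar; ring.
by rewrite daJ dbJ dabJ dbdab /jacobi_defect; ring.
Qed.

Lemma J_cycle a b c : J a b * J (a * b)%g c = J b c * J (b * c)%g a.
Proof.
have := Jstar_cocycle a b c.
rewrite [Jstar J a (b * c)%g]Jstar_sym [RHS]mulrC !JstarM_expand jacobi_defect_rotate.
by move/addIr.
Qed.

End JacobiCocycle.

Section FourierJacobi.

Variables (gT dT : finGroupType) (e : gT -> dT -> algC) (J : gT -> gT -> algC).
Variables (i k : dT -> dT).
Hypotheses (abelian_gT : abelian [set: gT]) (pairing_e : dual_pairing e).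
Hypotheses (iK : cancel i k) (kK : cancel k i).
Hypothesis i_inv : forall x, i x = (x * i x^-1)%g.
Hypothesis J_def : forall a b,
  J a b = (#|gT|%:R)^-1 * \sum_(x : dT) e a (i x) * e b (i x * x^-1)%g.

Local Notation m := (#|gT|%:R : algC).

Lemma mulJ_sum a b : m * J a b = \sum_x e a (i x) * e b (i x * x^-1)%g.
Proof. by rewrite J_def mulrA divff ?mul1r // -cardsT natrG_neq0. Qed.

Lemma J_inv a : J a a^-1%g = delta a.
Proof.
rewrite J_def (eq_bigr (e a)) => [|x _]; last first.
  rewrite (pairingMr pairing_e) !(pairingVl pairing_e) (pairingVr pairing_e).
  by rewrite invrK mulVKf ?(pairing_neq0 pairing_e).
rewrite (sum_pairingr pairing_e abelian_gT) (card_dual pairing_e abelian_gT).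
by rewrite mulKf // -cardsT natrG_neq0.
Qed.

Lemma sum_pairing_oplus_root a b c :
  \sum_x \sum_y e a x * e b y * e c (oplus_root k (oplus i x y))
  = m * J a b * (m * J (a * b)%g c).
Proof.
(* The pair (x, y) = (u i(s), s^-1 u i(s)) has x / y = s and x (+) y = u. *)
have shift_inj x : injective (fun s : dT => s^-1 * x)%g.
  by move=> s t /mulIg /invg_inj.
transitivity (\sum_s \sum_u
    e a (u * i s)%g * e b (s^-1 * (u * i s))%g * e c (oplus_root k u)).
  rewrite (eq_bigr _ (fun x _ => reindex_inj (shift_inj x))) exchange_big /=.
  apply: eq_bigr => s _; rewrite (reindex_inj (mulIg (i s))) /=.
  by apply: eq_bigr => u _; rewrite oplus_shift.
transitivity (\sum_s \sum_u (e a (i s) * e b (i s * s^-1)%g)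
                            * (e (a * b)%g u * e c (oplus_root k u))).
  apply: eq_bigr => s _; apply: eq_bigr => u _.
  by rewrite !(pairingMr pairing_e) (pairingMl pairing_e); ring.
rewrite -big_distrlr /= !mulJ_sum; congr (_ * _).
rewrite (reindex_inj (can_inj iK)) /=; apply: eq_bigr => t _.
by rewrite /oplus_root iK (dual_commute pairing_e).
Qed.

Lemma sum_pairing_oplusl_eq1 a b c :
  \sum_x \sum_y \sum_(z | oplus i (oplus i x y) z == 1%g) e a x * e b y * e c z
  = m * J a b * (m * J (a * b)%g c).
Proof.
rewrite -sum_pairing_oplus_root; apply: eq_bigr => x _; apply: eq_bigr => y _.
exact: (sum_oplus_eq1 iK kK (fun z => e a x * e b y * e c z)).
Qed.

Lemma sum_pairing_oplusr_eq1 a b c :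
  \sum_x \sum_y \sum_(z | oplus i x (oplus i y z) == 1%g) e a x * e b y * e c z
  = m * J b c * (m * J (b * c)%g a).
Proof.
rewrite -sum_pairing_oplusl_eq1 exchange_big; apply: eq_bigr => y _.
rewrite (exchange_big_dep predT) //=; apply: eq_bigr => z _.
apply: eq_big => [x | x _]; last by rewrite [RHS]mulrC mulrA.
by rewrite (oplusC (dual_commute pairing_e) i_inv).
Qed.

End FourierJacobi.

Theorem mainTheorem16 (gT dT : finGroupType) (e : gT -> dT -> algC)
  (J : gT -> gT -> algC) (i : dT -> dT) :
  abelian [set: gT] ->
  dual_pairing e ->
  jacobi_function J ->
  bijective i ->
  (forall x : dT, i x = (x * i x^-1)%g) ->
  (forall a b : gT,
     J a b = (#|gT|%:R)^-1 * \sum_(x : dT) e a (i x) * e b (i x * x^-1)%g) ->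
  forall a b c : gT,
    \sum_(x : dT) \sum_(y : dT) \sum_(z : dT | oplus i (oplus i x y) z == 1%g)
       e a x * e b y * e c z
    = \sum_(x : dT) \sum_(y : dT) \sum_(z : dT | oplus i x (oplus i y z) == 1%g)
       e a x * e b y * e c z.
Proof.
move=> abelian_gT pairing_e [J_sym Jstar_cocycle _] [k iK kK] i_inv J_def a b c.
rewrite (sum_pairing_oplusl_eq1 pairing_e iK kK J_def).
rewrite (sum_pairing_oplusr_eq1 pairing_e iK kK i_inv J_def) [LHS]mulrACA [RHS]mulrACA.
by rewrite (J_cycle J_sym Jstar_cocycle (J_inv abelian_gT pairing_e J_def)).
Qed.
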